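(* Let $G$ be a strong $(\ell,d)$-graph with strong $(\ell,d)$-partitions $\pi$ and $\pi'$. Then $p(\pi)=p(\pi')$.
   Context: For a graph $G$ and $U,W\subseteq V(G)$, $\Delta(U,W)=\max\{|N(u)\cap W|,|N(x)\cap U|:u\in U,x\in W\}$ and $\overline\Delta(U,W)$ is defined the same way with $\overline N(v)=V(G)\setminus(N(v)\cup\{v\})$ replacing $N(v)$. A partition $\{V_1,\dots,V_{\ell'}\}$ of $V(G)$ is an $(\ell,d)$-partition if $\ell'\le\ell$ and for each pair of not necessarily distinct $i,j$, $V_i$ is $d$-sparse with respect to $V_j$ ($\Delta(V_i,V_j)\le d$) or $d$-dense with respect to $V_j$ ($\overline\Delta(V_i,V_j)\le d$). It is strong if each bag has at least $5\cdot2^\ell d$ vertices; $G$ is a strong $(\ell,d)$-graph if it has a strong $(\ell,d)$-partition. For a strong $(\ell,d)$-partition $\pi$, define $V_i\sim V_j$ iff for every bag $V_k$, either $V_k$ is $d$-dense with respect to both $V_i$ and $V_j$, or $d$-sparse with respect to both; $p(\pi)$ is the partition of $V(G)$ whose parts are the unions of the bags in each $\sim$-equivalence class. *)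

From mathcomp Require Import all_boot all_order.
Set Implicit Arguments. Unset Strict Implicit. Unset Printing Implicit Defensive.

Definition simple_graph (T : finType) (e : rel T) : Prop :=
  symmetric e /\ irreflexive e.

Section Defs.
Variables (T : finType) (e : rel T).

Definition nbhd (v : T) : {set T} := [set u | e v u].
Definition conbhd (v : T) : {set T} := ~: (nbhd v :|: [set v]).

Definition Delta (U W : {set T}) : nat :=
  maxn (\max_(u in U) #|nbhd u :&: W|) (\max_(x in W) #|nbhd x :&: U|).
Definition coDelta (U W : {set T}) : nat :=
  maxn (\max_(u in U) #|conbhd u :&: W|) (\max_(x in W) #|conbhd x :&: U|).

Definition sparse (d : nat) (U W : {set T}) : bool := Delta U W <= d.
Definition dense (d : nat) (U W : {set T}) : bool := coDelta U W <= d.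

Definition ld_partition (l d : nat) (P : {set {set T}}) : Prop :=
  partition P [set: T] /\ #|P| <= l /\
  (forall Vi Vj, Vi \in P -> Vj \in P -> sparse d Vi Vj \/ dense d Vi Vj).

Definition strong_ld_partition (l d : nat) (P : {set {set T}}) : Prop :=
  ld_partition l d P /\ (forall Vi, Vi \in P -> 5 * 2 ^ l * d <= #|Vi|).

Definition strong_ld_graph (l d : nat) : Prop :=
  exists P, strong_ld_partition l d P.

Definition bag_equiv (d : nat) (P : {set {set T}}) (Vi Vj : {set T}) : bool :=
  [forall Vk in P, (dense d Vk Vi && dense d Vk Vj) ||
                   (sparse d Vk Vi && sparse d Vk Vj)].

Definition p_of (d : nat) (P : {set {set T}}) : {set {set T}} :=
  [set (\bigcup_(B in P | bag_equiv d P A B) B) | A in P].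

End Defs.

From mathcomp Require Import all_boot all_order.
From mathcomp Require Import zify.
Set Implicit Arguments. Unset Strict Implicit. Unset Printing Implicit Defensive.

(* The classes of p(pi) can be described without reference to pi: u and v lie
   in the same class iff at most 2dl vertices outside {u, v} distinguish
   them, i.e. are adjacent to exactly one of u and v.  A bag agreeing on the
   bags of u and v contributes at most 2d distinguishing vertices (the
   neighbours, resp. non-neighbours, of u and of v in it), so equivalent bags
   give at most 2dl of them.  A bag that is dense to the bag of u but sparse
   to the bag of v has all but 2d + 2 of its at least 5 2^l d vertices
   distinguishing u from v, and 5 2^l d > 2d(l + 1) + 2 once d > 0. *)

Lemma leq_card_bigcup (I T : finType) (P : {pred I}) (F : I -> {set T}) :
  #|\bigcup_(i in P) F i| <= \sum_(i in P) #|F i|.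
Proof.
elim/big_rec2: _ => [|i n S _ IH]; first by rewrite cards0.
by apply: leq_trans (leq_card_setU _ _).1 _; rewrite leq_add2l.
Qed.

Section Distinguishing.
Variables (T : finType) (e : rel T).

Definition distinguishing (u v : T) : {set T} :=
  [set w | (e u w != e v w) && (w != u) && (w != v)].

Definition agree (d : nat) (Vk A B : {set T}) : bool :=
  (dense e d Vk A && dense e d Vk B) || (sparse e d Vk A && sparse e d Vk B).

Lemma distinguishingC u v : distinguishing u v = distinguishing v u.
Proof. by apply/setP => w; rewrite !inE eq_sym andbAC. Qed.

Lemma distinguishing_sub_nbhdU u v :
  distinguishing u v \subset nbhd e u :|: nbhd e v.
Proof. by apply/subsetP => w; rewrite !inE; case: (e u w); case: (e v w). Qed.

Lemma distinguishing_sub_conbhdU u v :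
  distinguishing u v \subset conbhd e u :|: conbhd e v.
Proof.
apply/subsetP => w; rewrite !inE => /andP[/andP[+ /negbTE->] /negbTE->].
by case: (e u w); case: (e v w).
Qed.

Lemma distinguishing_conbhd_nbhd_cover u v :
  distinguishing u v :|: conbhd e u :|: nbhd e v :|: [set u; v] = setT.
Proof.
apply/setP => w; rewrite !inE; case: (w =P u); case: (w =P v) => /= _ _;
  by case: (e u w); case: (e v w); rewrite ?orbT.
Qed.

Lemma dense_card_conbhd d U W x :
  dense e d U W -> x \in W -> #|conbhd e x :&: U| <= d.
Proof.
move=> dUW xW; apply: leq_trans dUW; apply: leq_trans (leq_maxr _ _).
exact: (@leq_bigmax_cond _ (mem W) (fun x => #|conbhd e x :&: U|) x xW).
Qed.

Lemma sparse_card_nbhd d U W x :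
  sparse e d U W -> x \in W -> #|nbhd e x :&: U| <= d.
Proof.
move=> sUW xW; apply: leq_trans sUW; apply: leq_trans (leq_maxr _ _).
exact: (@leq_bigmax_cond _ (mem W) (fun x => #|nbhd e x :&: U|) x xW).
Qed.

Lemma sparse_set1 d u : irreflexive e -> sparse e d [set u] [set u].
Proof.
move=> irr; rewrite /sparse /Delta !big_set1 maxnn.
suff -> : nbhd e u :&: [set u] = set0 by rewrite cards0.
by apply/setP => x; rewrite !inE; case: (x =P u) => [->|]; rewrite ?irr ?andbF.
Qed.

Lemma dense_set1 d u : dense e d [set u] [set u].
Proof.
rewrite /dense /coDelta !big_set1 maxnn.
suff -> : conbhd e u :&: [set u] = set0 by rewrite cards0.
by apply/setP => x; rewrite !inE; case: (x =P u) => [->|]; rewrite ?orbT ?andbF.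
Qed.

Lemma card_distinguishing_agree d (Vk A B : {set T}) u v :
  u \in A -> v \in B -> agree d Vk A B ->
  #|distinguishing u v :&: Vk| <= d + d.
Proof.
move=> uA vB /orP[/andP[dA dB]|/andP[sA sB]].
- apply: leq_trans (leq_add (dense_card_conbhd dA uA) (dense_card_conbhd dB vB)).
  apply: leq_trans (leq_card_setU _ _).1; rewrite -setIUl.
  by apply/subset_leq_card/setSI/distinguishing_sub_conbhdU.
- apply: leq_trans (leq_add (sparse_card_nbhd sA uA) (sparse_card_nbhd sB vB)).
  apply: leq_trans (leq_card_setU _ _).1; rewrite -setIUl.
  by apply/subset_leq_card/setSI/distinguishing_sub_nbhdU.
Qed.

Lemma sub_distinguishing_conbhd_nbhd (U : {set T}) u v :
  U \subset distinguishing u v :|: (conbhd e u :&: U) :|: (nbhd e v :&: U)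
            :|: [set u; v].
Proof.
apply/subsetP => w wU; move: (in_setT w).
by rewrite -(distinguishing_conbhd_nbhd_cover u v) !inE wU !andbT.
Qed.

Lemma card_disagree_bag d (Vk A B : {set T}) u v :
  u \in A -> v \in B -> dense e d Vk A -> sparse e d Vk B ->
  #|Vk| <= #|distinguishing u v| + d + d + 2.
Proof.
move=> uA vB dA sB.
apply: leq_trans (subset_leq_card (sub_distinguishing_conbhd_nbhd Vk u v)) _.
apply: leq_trans (leq_card_setU _ _).1 _.
apply: leq_add; last by rewrite cards2; case: (u != v).
apply: leq_trans (leq_card_setU _ _).1 _.
apply: leq_add; last exact: sparse_card_nbhd sB vB.
apply: leq_trans (leq_card_setU _ _).1 _.
by rewrite leq_add2l; exact: dense_card_conbhd dA uA.
Qed.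

Section StrongPartition.
Variables (l d : nat) (P : {set {set T}}).
Hypotheses (irr : irreflexive e) (hP : strong_ld_partition e l d P).

Lemma strong_partition_cover x : x \in cover P.
Proof. by case: hP => [[/and3P[/eqP-> _ _] _] _]; rewrite inE. Qed.

Lemma strong_partition_trivIset : trivIset P.
Proof. by case: hP => [[/and3P[_ -> _] _] _]. Qed.

Lemma strong_partition_bag_nonempty A : A \in P -> exists u, u \in A.
Proof.
case: hP => [[/and3P[_ _ P0] _] _] AP.
case: (set_0Vmem A) => [A0|[u uA]]; last by exists u.
by move: P0; rewrite -A0 AP.
Qed.

Lemma strong_partition_bag_eq A B u : A \in P -> B \in P ->
  u \in A -> u \in B -> A = B.
Proof.
move=> AP BP uA uB.
have trivP := strong_partition_trivIset.
by rewrite -(def_pblock trivP AP uA) (def_pblock trivP BP uB).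
Qed.

(* With d = 0 the bags may be arbitrarily small: here the disagreeing bag is
   squeezed into {u, v}, hence is the singleton bag of u or of v, and a
   singleton bag is both sparse and dense to itself. *)
Lemma disagree_distinguishing0 (Vk A B : {set T}) u v :
  Vk \in P -> A \in P -> B \in P -> u \in A -> v \in B ->
  dense e 0 Vk A -> sparse e 0 Vk B -> ~~ agree 0 Vk A B ->
  distinguishing u v != set0.
Proof.
move=> VkP AP BP uA vB dA sB disagree; apply/negP => /eqP X0.
have Vk_uv : Vk \subset [set u; v].
  have [/cards0_eq c0 /cards0_eq n0] :
      #|conbhd e u :&: Vk| = 0 /\ #|nbhd e v :&: Vk| = 0.
    split; apply/eqP; rewrite -leqn0.
      exact: dense_card_conbhd dA uA.
    exact: sparse_card_nbhd sB vB.
  by have := sub_distinguishing_conbhd_nbhd Vk u v; rewrite X0 c0 n0 !set0U.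
have [w wVk] := strong_partition_bag_nonempty VkP.
have AB : A != B by apply: contraNneq disagree => AB; rewrite /agree -AB dA.
have [uVk|uVk] := boolP (u \in Vk).
- have eVkA := strong_partition_bag_eq VkP AP uVk uA.
  suff Vk1 : Vk = [set u].
    have sA : sparse e 0 Vk A by rewrite -eVkA Vk1 sparse_set1.
    by rewrite /agree sA sB orbT in disagree.
  apply/eqP; rewrite eqEsubset sub1set uVk andbT; apply/subsetP => x xVk.
  move: (subsetP Vk_uv x xVk); rewrite !inE => /orP[//|/eqP xv].
  by move: AB; rewrite (strong_partition_bag_eq BP VkP vB) -?xv // eVkA eqxx.
- have vVk : v \in Vk.
    move: (subsetP Vk_uv w wVk); rewrite !inE => /orP[/eqP wu|/eqP <-] //.
    by move: uVk; rewrite -wu wVk.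
  have eVkB := strong_partition_bag_eq VkP BP vVk vB.
  suff Vk1 : Vk = [set v].
    have dB : dense e 0 Vk B by rewrite -eVkB Vk1 dense_set1.
    by rewrite /agree dA dB in disagree.
  apply/eqP; rewrite eqEsubset sub1set vVk andbT; apply/subsetP => x xVk.
  move: (subsetP Vk_uv x xVk); rewrite !inE => /orP[/eqP xu|//].
  by move: uVk; rewrite -xu xVk.
Qed.

Lemma disagree_card_distinguishing (Vk A B : {set T}) u v :
  Vk \in P -> A \in P -> B \in P -> u \in A -> v \in B ->
  dense e d Vk A -> sparse e d Vk B -> ~~ agree d Vk A B ->
  (d + d) * l < #|distinguishing u v|.
Proof.
move=> VkP AP BP uA vB dA sB disagree.
case: d hP dA sB disagree => [|d'] hP' dA sB disagree.
  rewrite mul0n card_gt0.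
  exact: disagree_distinguishing0 VkP AP BP uA vB dA sB disagree.
have bagVk := card_disagree_bag uA vB dA sB.
have large : 5 * 2 ^ l * d'.+1 <= #|Vk| by case: hP' => _; exact.
have := ltn_expl l (ltnSn 1); nia.
Qed.

Lemma bag_equivE (A B : {set T}) u v :
  A \in P -> B \in P -> u \in A -> v \in B ->
  bag_equiv e d P A B = (#|distinguishing u v| <= (d + d) * l).
Proof.
move=> AP BP uA vB; case: hP => [[_ [cardP sparse_or_dense]] _].
apply/forall_inP/idP => [agreeAB | small Vk VkP].
- have cover_X :
      distinguishing u v \subset \bigcup_(Vk in P) (distinguishing u v :&: Vk).
    apply/subsetP => w wX; apply/bigcupP; exists (pblock P w).
      exact/pblock_mem/strong_partition_cover.
    by rewrite inE wX mem_pblock strong_partition_cover.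
  apply: leq_trans (subset_leq_card cover_X) _.
  apply: leq_trans (leq_card_bigcup _ _) _.
  apply: (@leq_trans (\sum_(Vk in P) (d + d))).
    apply: leq_sum => Vk VkP.
    exact: card_distinguishing_agree uA vB (agreeAB Vk VkP).
  by rewrite sum_nat_const mulnC leq_mul2l cardP orbT.
- apply/negPn/negP => disagree.
  case: (sparse_or_dense Vk A VkP AP) => hA;
    case: (sparse_or_dense Vk B VkP BP) => hB.
  + by move: disagree; rewrite /agree hA hB orbT.
  + have disagree' : ~~ agree d Vk B A by rewrite /agree andbC [sparse _ _ _ B && _]andbC.
    have := disagree_card_distinguishing VkP BP AP vB uA hB hA disagree'.
    by rewrite distinguishingC ltnNge small.
  + have := disagree_card_distinguishing VkP AP BP uA vB hA hB disagree.
    by rewrite ltnNge small.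
  + by move: disagree; rewrite /agree hA hB.
Qed.

Lemma p_ofE :
  p_of e d P =
  [set [set v | #|distinguishing u v| <= (d + d) * l] | u in [set: T]].
Proof.
have in_pblock x : x \in pblock P x by rewrite mem_pblock strong_partition_cover.
have classE A u : A \in P -> u \in A ->
    \bigcup_(B in P | bag_equiv e d P A B) B =
    [set v | #|distinguishing u v| <= (d + d) * l].
  move=> AP uA; apply/setP => v; rewrite inE; apply/bigcupP/idP.
    by case=> B /andP[BP] /[swap] vB; rewrite (bag_equivE AP BP uA vB).
  have vP := pblock_mem (strong_partition_cover v).
  by move=> small; exists (pblock P v); rewrite // vP (bag_equivE AP vP uA (in_pblock v)).
apply/setP => S; apply/imsetP/imsetP => [[A AP ->]|[u _ ->]].
  have [u uA] := strong_partition_bag_nonempty AP.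
  by exists u; rewrite ?inE // (classE A u).
have uP := pblock_mem (strong_partition_cover u).
by exists (pblock P u); rewrite // (classE _ u).
Qed.

End StrongPartition.
End Distinguishing.

Theorem theorem2p6 (T : finType) (e : rel T) (l d : nat)
  (P P' : {set {set T}}) :
  simple_graph e ->
  strong_ld_graph e l d ->
  strong_ld_partition e l d P ->
  strong_ld_partition e l d P' ->
  p_of e d P = p_of e d P'.
Proof.
move=> [_ irr] _ hP hP'.
by rewrite (p_ofE irr hP) (p_ofE irr hP').
Qed.
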